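(* Let $\mathcal{G}$ be a connected hypergraph with spectral radius $\rho$ and principal eigenvector $X=(x_v)$. Let $k\ge 3$ and let $e_0,e_1,e_2$ be edges of $\mathcal{G}$ with $e_0=\{v_1,v_2,\dots,v_{k-1},v_k\}$, such that $\deg_{\mathcal{G}}(v_2)=\cdots=\deg_{\mathcal{G}}(v_{k-1})=1$, $e_1\cap e_0=\{v_1\}$ and $e_2\cap e_0=\{v_k\}$. Then $$x_{v_2}=x_{v_3}=\cdots=x_{v_{k-1}}=\frac{x_{v_1}+x_{v_k}}{(k-1)\rho-(k-3)}<\min\{x_{v_1},x_{v_k}\}.$$
   Context: A hypergraph has a finite vertex set and distinct edges (subsets with at least two vertices); $\deg_{\mathcal{G}}(v)$ is the number of edges containing $v$. The adjacency matrix has $(\mathcal{A}_{\mathcal{G}})_{ij}=\sum_{e\ni i,j}\frac{1}{|e|-1}$ for $i\ne j$ and $0$ on the diagonal; $\rho$ is its spectral radius. For connected $\mathcal{G}$ the principal eigenvector is the unique positive eigenvector $X$ of $\mathcal{A}_{\mathcal{G}}$ for $\rho$ with $\sum_v x_v^2=1$. *)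

From mathcomp Require Import all_boot all_order all_algebra.
Set Implicit Arguments. Unset Strict Implicit. Unset Printing Implicit Defensive.
Import Order.TTheory GRing.Theory Num.Theory.
Local Open Scope ring_scope.

Definition is_hypergraph (n : nat) (E : {set {set 'I_n}}) : Prop :=
  forall e, e \in E -> (2 <= #|e|)%N.

Definition hdeg (n : nat) (E : {set {set 'I_n}}) (v : 'I_n) : nat :=
  #|[set e in E | v \in e]|.

Definition hadj (n : nat) (E : {set {set 'I_n}}) : rel 'I_n :=
  fun u v => [exists e in E, (u \in e) && (v \in e)].

Definition hconnected (n : nat) (E : {set {set 'I_n}}) : Prop :=
  forall u v : 'I_n, connect (hadj E) u v.

Definition hadjmx (R : numFieldType) (n : nat) (E : {set {set 'I_n}}) : 'M[R]_n :=
  \matrix_(i, j) (if i == j then 0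
                  else \sum_(e in E | (i \in e) && (j \in e)) ((#|e|.-1)%:R)^-1).

Definition is_spectral_radius (R : realFieldType) (n : nat) (A : 'M[R]_n) (rho : R) : Prop :=
  eigenvalue A rho /\ (forall a : R, eigenvalue A a -> `|a| <= rho).

Definition is_principal_eigenvector (R : realFieldType) (n : nat) (A : 'M[R]_n)
    (rho : R) (X : 'cV[R]_n) : Prop :=
  [/\ forall i, 0 < X i 0, A *m X = rho *: X & \sum_i X i 0 ^+ 2 = 1].

From mathcomp Require Import all_boot all_order all_algebra.
From mathcomp Require Import zify lra.
Import Order.TTheory GRing.Theory Num.Theory.
Local Open Scope ring_scope.

(* At a vertex u of degree 1 in an edge e the eigen-equation only sees e:
   ((|e|-1) rho + 1) x_u = sum_{j in e} x_j.  So all such vertices of e carry the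
   same value y, and summing over e expresses y through the two remaining
   vertices.  A vertex w of e lying in a second edge picks up an extra positive
   term, ((|e|-1) rho + 1) x_w > sum_{j in e} x_j, whence y < x_w. *)

Lemma hadjmx_mulmxE (R : numFieldType) (n : nat) (E : {set {set 'I_n}})
    (X : 'cV[R]_n) (u : 'I_n) :
  (hadjmx R E *m X) u 0 =
  \sum_(e in E | u \in e) (\sum_(j in e | j != u) X j 0) / (#|e|.-1)%:R.
Proof.
rewrite mxE; under eq_bigr do rewrite mxE.
under [RHS]eq_bigr do rewrite mulr_suml big_mkcond /=.
rewrite big_mkcond /= exchange_big /=; apply: eq_bigr => j _.
have [<-|unj] := eqVneq u j.
  by rewrite mul0r; symmetry; apply: big1 => e _; rewrite andbF.
rewrite mulr_suml [LHS]big_mkcond [RHS]big_mkcond /=; apply: eq_bigr => e _.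
by case: (e \in E); case: (u \in e); case: (j \in e); rewrite /= ?mul0r // mulrC.
Qed.

Lemma sum_setD1_gt0 (R : numDomainType) (T : finType) (F : T -> R)
    (e : {set T}) (u : T) :
  (forall j, 0 < F j) -> (2 <= #|e|)%N -> u \in e ->
  0 < \sum_(j in e | j != u) F j.
Proof.
move=> F_gt0 e_ge2 ue.
have : (0 < #|e :\ u|)%N by move: e_ge2; rewrite (cardsD1 u e) ue.
case/card_gt0P => j; rewrite !inE => /andP [ju je].
rewrite (bigD1 j) /=; last by rewrite je ju.
by apply: ltr_pwDl => //; apply: sumr_ge0 => i _; exact/ltW.
Qed.

Lemma card_indexed_set {T : finType} {A : {set T}} {k : nat} {v : nat -> T} :
  {in [pred i : nat | (1 <= i <= k)%N] &, injective v} ->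
  (forall x, x \in A <-> exists2 i, (1 <= i <= k)%N & x = v i) ->
  #|A| = k.
Proof.
move=> v_inj A_vE.
have A_iota : A =i map v (iota 1 k).
  move=> x; apply/idP/mapP => [/A_vE [j j_range ->]|[j]].
    by exists j; rewrite // mem_iota add1n ltnS.
  by rewrite mem_iota add1n ltnS => j_range ->; apply/A_vE; exists j.
rewrite (eq_card A_iota) (card_uniqP _) ?size_map ?size_iota //.
rewrite map_inj_in_uniq ?iota_uniq // => j j'.
by rewrite !mem_iota => j_range j'_range /v_inj; apply; rewrite inE; lia.
Qed.

Section PositiveEigenvector.

Context {R : realFieldType} {n : nat} {E : {set {set 'I_n}}}.
Context {rho : R} {X : 'cV[R]_n}.
Hypothesis hyperE : is_hypergraph E.
Hypothesis X_gt0 : forall i, 0 < X i 0.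
Hypothesis eigenX : hadjmx R E *m X = rho *: X.

Lemma eigen_equation (u : 'I_n) :
  rho * X u 0 =
  \sum_(e in E | u \in e) (\sum_(j in e | j != u) X j 0) / (#|e|.-1)%:R.
Proof. by rewrite -hadjmx_mulmxE eigenX mxE. Qed.

Lemma edge_size_pred_gt0 {e : {set 'I_n}} : e \in E -> 0 < (#|e|.-1)%:R :> R.
Proof. by move=> /hyperE; rewrite ltr0n; case: #|e| => [|[|c]]. Qed.

Lemma edge_term_gt0 {e : {set 'I_n}} {u : 'I_n} : e \in E -> u \in e ->
  0 < (\sum_(j in e | j != u) X j 0) / (#|e|.-1)%:R.
Proof.
by move=> eE ue; rewrite divr_gt0 ?edge_size_pred_gt0 ?sum_setD1_gt0 ?hyperE.
Qed.

Lemma pendant_vertexE {e : {set 'I_n}} {u : 'I_n} :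
  e \in E -> u \in e -> hdeg E u = 1%N ->
  ((#|e|.-1)%:R * rho + 1) * X u 0 = \sum_(j in e) X j 0.
Proof.
move=> eE ue /eqP /cards1P [e' edges_u].
have e'_eq : e = e' by apply/set1P; rewrite -edges_u inE eE ue.
rewrite -e'_eq in edges_u.
have := eigen_equation u.
rewrite (eq_bigl (fun f => f \in [set e])); last by move=> f; rewrite -edges_u inE.
rewrite big_set1 (bigD1 u ue) /= => eq_u.
by rewrite mulrDl mul1r -mulrA eq_u mulrC divfK ?gt_eqF ?edge_size_pred_gt0 // addrC.
Qed.

Lemma shared_vertex_gt {e e' : {set 'I_n}} {u : 'I_n} :
  e \in E -> e' \in E -> e' != e -> u \in e -> u \in e' ->
  \sum_(j in e) X j 0 < ((#|e|.-1)%:R * rho + 1) * X u 0.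
Proof.
move=> eE e'E e'_neq ue ue'.
have term_lt : (\sum_(j in e | j != u) X j 0) / (#|e|.-1)%:R < rho * X u 0.
  rewrite eigen_equation (bigD1 e) /=; last by rewrite eE ue.
  rewrite ltrDl (bigD1 e') /=; last by rewrite e'E ue' e'_neq.
  apply: ltr_pwDl; first exact: edge_term_gt0.
  by apply: sumr_ge0 => f /andP [/andP [/andP [fE uf] _] _]; rewrite ltW ?edge_term_gt0.
rewrite (bigD1 u ue) /= mulrDl mul1r addrC ltrD2r -mulrA mulrC.
by rewrite -ltr_pdivrMr ?edge_size_pred_gt0.
Qed.

Lemma pendant_scale_gt0 {e : {set 'I_n}} {u : 'I_n} :
  e \in E -> u \in e -> hdeg E u = 1%N -> 0 < (#|e|.-1)%:R * rho + 1.
Proof.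
move=> eE ue deg_u.
have sum_gt0 : 0 < \sum_(j in e) X j 0.
  by rewrite (bigD1 u ue) /= addr_gt0 ?sum_setD1_gt0 ?hyperE.
by move: sum_gt0; rewrite -(pendant_vertexE eE ue deg_u) pmulr_lgt0.
Qed.

Lemma pendant_lt_branch {e e' : {set 'I_n}} {u w : 'I_n} :
  e \in E -> u \in e -> hdeg E u = 1%N -> e' \in E -> e' :&: e = [set w] ->
  X u 0 < X w 0.
Proof.
move=> eE ue deg_u e'E e'_e.
have /setIP [we' we] : w \in e' :&: e by rewrite e'_e set11.
have e'_neq : e' != e.
  move: (hyperE e eE); apply: contraTneq => e'_eq.
  by rewrite e'_eq setIid in e'_e; rewrite e'_e cards1.
rewrite -(ltr_pM2l (pendant_scale_gt0 eE ue deg_u)) pendant_vertexE //.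
exact: shared_vertex_gt e'E e'_neq we we'.
Qed.

Lemma pendant_vertices_eq {e : {set 'I_n}} {u w : 'I_n} :
  e \in E -> u \in e -> hdeg E u = 1%N -> w \in e -> hdeg E w = 1%N ->
  X w 0 = X u 0.
Proof.
move=> eE ue deg_u we deg_w.
apply: (mulfI (lt0r_neq0 (pendant_scale_gt0 eE ue deg_u))).
by rewrite !pendant_vertexE.
Qed.

Lemma pendant_edge_value {e : {set 'I_n}} {a b u : 'I_n} :
  e \in E -> a \in e -> b \in e -> a != b ->
  (forall w, w \in e -> w != a -> w != b -> hdeg E w = 1%N) ->
  u \in e -> u != a -> u != b ->
  ((#|e|.-1)%:R * rho - (#|e| - 3)%:R) * X u 0 = X a 0 + X b 0.
Proof.
move=> eE ae be ab pendant ue ua ub.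
have deg_u := pendant u ue ua ub.
have be_a : b \in e :\ a by rewrite !inE eq_sym ab.
have ue_ab : u \in e :\ a :\ b by rewrite !inE ub ua.
have inner_eq : \sum_(j in e :\ a :\ b) X j 0 = X u 0 *+ #|e :\ a :\ b|.
  rewrite -sumr_const; apply: eq_bigr => w; rewrite !inE => /andP [wb /andP [wa we]].
  exact: pendant_vertices_eq eE ue deg_u we (pendant w we wa wb).
have card_e : #|e| = (#|e :\ a :\ b|).+2.
  by rewrite (cardsD1 a e) (cardsD1 b (e :\ a)) ae be_a.
have : (0 < #|e :\ a :\ b|)%N by apply/card_gt0P; exists u.
have := pendant_vertexE eE ue deg_u.
rewrite (big_setD1 a ae) (big_setD1 b be_a) inner_eq card_e.
case: #|e :\ a :\ b| => [//|c] /= value_u _.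
rewrite !subSS subn0 -mulr_natr -!natr1 in value_u *.
nra.
Qed.

End PositiveEigenvector.

Theorem lemma3p6 (R : realFieldType) (n : nat) (E : {set {set 'I_n}})
    (rho : R) (X : 'cV[R]_n) (k : nat) (v : nat -> 'I_n)
    (e0 e1 e2 : {set 'I_n}) :
  is_hypergraph E ->
  hconnected E ->
  is_spectral_radius (hadjmx R E) rho ->
  is_principal_eigenvector (hadjmx R E) rho X ->
  (3 <= k)%N ->
  e0 \in E -> e1 \in E -> e2 \in E ->
  (* e0 = {v_1, ..., v_k} with the v_i distinct *)
  {in [pred i : nat | (1 <= i <= k)%N] &, injective v} ->
  (forall x, x \in e0 <-> exists2 i, (1 <= i <= k)%N & x = v i) ->
  (forall i, (2 <= i <= k.-1)%N -> hdeg E (v i) = 1%N) ->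
  e1 :&: e0 = [set v 1%N] ->
  e2 :&: e0 = [set v k] ->
  forall i, (2 <= i <= k.-1)%N ->
    X (v i) 0 = (X (v 1%N) 0 + X (v k) 0) / ((k.-1)%:R * rho - (k - 3)%:R)
    /\ X (v i) 0 < Num.min (X (v 1%N) 0) (X (v k) 0).
Proof.
move=> hyperE _ _ [X_gt0 eigenX _] k_ge3 e0E e1E e2E v_inj e0_vE pendant_v
  e1_e0 e2_e0 i i_mid.
have v_e0 j : (1 <= j <= k)%N -> v j \in e0 by move=> j_range; apply/e0_vE; exists j.
have v_neq j j' : (1 <= j <= k)%N -> (1 <= j' <= k)%N -> j != j' -> v j != v j'.
  by move=> j_range j'_range; apply: contraNneq => /v_inj ->; rewrite ?inE.
have e0_pendant u : u \in e0 -> u != v 1%N -> u != v k -> hdeg E u = 1%N.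
  move=> /e0_vE [j j_range ->] j_neq1 j_neqk; apply: pendant_v.
  have : j != 1%N by apply: contraNneq j_neq1 => ->.
  have : j != k by apply: contraNneq j_neqk => ->.
  lia.
have vi_e0 : v i \in e0 by apply: v_e0; lia.
have vi_v1 : v i != v 1%N by apply: v_neq; lia.
have vi_vk : v i != v k by apply: v_neq; lia.
have v1_e0 : v 1%N \in e0 by apply: v_e0; lia.
have vk_e0 : v k \in e0 by apply: v_e0; lia.
have v1_vk : v 1%N != v k by apply: v_neq; lia.
have := pendant_edge_value hyperE X_gt0 eigenX e0E v1_e0 vk_e0 v1_vk e0_pendant
  vi_e0 vi_v1 vi_vk.
rewrite (card_indexed_set v_inj e0_vE) => vi_value.
have deg_vi := pendant_v i i_mid.
have lt_branch := pendant_lt_branch hyperE X_gt0 eigenX e0E vi_e0 deg_vi.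
split; last by rewrite lt_min (lt_branch _ _ e1E e1_e0) (lt_branch _ _ e2E e2_e0).
have D_gt0 : 0 < (k.-1)%:R * rho - (k - 3)%:R.
  by rewrite -(pmulr_lgt0 _ (X_gt0 (v i))) vi_value addr_gt0.
by rewrite -vi_value mulrC mulKf ?lt0r_neq0.
Qed.
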